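(* Let $G$ be a finite simple connected graph and $G^*$ its twin graph. If $\beta(G^* )=n(G^* )-t$ for some positive integer $t$, then $\beta(G)\le n(G)-t$.
   Context: $n(X)$ is the number of vertices of $X$. For an ordered set $W=\{w_1,\dots,w_k\}$ of vertices of a connected graph $X$, $r(v|W)=(d(v,w_1),\dots,d(v,w_k))$ with $d$ the shortest-path distance; $W$ is resolving if distinct vertices have distinct vectors, and $\beta(X)$ is the minimum size of a resolving set. Two distinct vertices $u,v$ of $G$ are twins if $N(v)\setminus\{u\}=N(u)\setminus\{v\}$; $u\equiv v$ iff $u=v$ or they are twins, an equivalence relation with classes $v^*$. The twin graph $G^*$ has vertex set $\{v^*:v\in V(G)\}$ and $u^*v^*\in E(G^* )$ iff $uv\in E(G)$ (well defined). *)

From mathcomp Require Import all_boot.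
Set Implicit Arguments. Unset Strict Implicit. Unset Printing Implicit Defensive.

(* A graph is given by a finite type T, a vertex set V : {set T} and an
   adjacency relation e : rel T (only edges between vertices of V matter). *)
Section Graphs.
Variables (T : finType) (e : rel T) (V : {set T}).

Definition reach (u : T) (k : nat) : {set T} :=
  iter k (fun S => S :|: [set y in V | [exists x in S, e x y]]) [set u].

(* shortest-path distance d(u,v) (in a connected graph, < #|T|.+1) *)
Definition dist (u v : T) : nat :=
  find (fun k => v \in reach u k) (iota 0 #|T|.+1).

Definition resolving (W : {set T}) : bool :=
  (W \subset V) &&
  [forall u in V, forall v in V,
     [forall w in W, dist u w == dist v w] ==> (u == v)].

Definition metric_dim : nat :=
  \big[minn/#|V|]_(W : {set T} | resolving W) #|W|.
End Graphs.

Definition simple_graph (T : finType) (e : rel T) : Prop :=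
  symmetric e /\ irreflexive e.

Definition connected_graph (T : finType) (e : rel T) : Prop :=
  forall u v : T, connect e u v.

Definition twins (T : finType) (e : rel T) (u v : T) : bool :=
  (u != v) && ([set y | e v y] :\ u == [set y | e u y] :\ v).

Definition tclass (T : finType) (e : rel T) (v : T) : {set T} :=
  [set u | (u == v) || twins e u v].

Definition twin_vertices (T : finType) (e : rel T) : {set {set T}} :=
  [set tclass e v | v : T].

Definition twin_edge (T : finType) (e : rel T) : rel {set T} :=
  fun A B => (A != B) && [exists u in A, exists v in B, e u v].

From mathcomp Require Import all_boot zify.
Set Implicit Arguments. Unset Strict Implicit. Unset Printing Implicit Defensive.

(* Choose a metric basis B of the twin graph and one representative of every
   twin class outside B; these t representatives form a set R, and the
   complement of R resolves G.  Two vertices of R lie in distinct classes, so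
   some class c in B sees their classes at different distances in the twin
   graph; any vertex of c lies outside R and outside both classes, and for a
   vertex w not twin to x the distance from x to w in G equals the distance
   from the class of x to the class of w in the twin graph, because a walk can
   always be rerouted through a twin of its endpoint. *)

Section Reach.
Variables (T : finType) (e : rel T) (V : {set T}).

Lemma reach0 u : reach e V u 0 = [set u].
Proof. by []. Qed.

Lemma reachS u k :
  reach e V u k.+1 = reach e V u k :|: [set y in V | [exists x in reach e V u k, e x y]].
Proof. by []. Qed.

Lemma reach_mono u k j : k <= j -> reach e V u k \subset reach e V u j.
Proof.
move=> /subnKC <-; elim: (j - k) => [|i IH]; first by rewrite addn0.
by rewrite addnS reachS (subset_trans IH) ?subsetUl.
Qed.

Lemma dist_self u : dist e V u u = 0.
Proof. by rewrite /dist /= inE eqxx. Qed.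

Lemma dist_eq0 u v : dist e V u v = 0 -> u = v.
Proof. by rewrite /dist /= inE; case: (v =P u) => [->|]. Qed.

Lemma resolving_self : resolving e V V.
Proof.
rewrite /resolving subxx; apply/forallP => u; apply/implyP => uV.
apply/forallP => v; apply/implyP => _; apply/implyP => /forallP/(_ u).
by rewrite uV dist_self /= => /eqP/esym/dist_eq0 ->.
Qed.

Lemma metric_dim_attained : exists2 W, resolving e V W & #|W| = metric_dim e V.
Proof.
rewrite /metric_dim; apply: (big_ind (fun m => exists2 W, resolving e V W & #|W| = m)).
- by exists V; first exact: resolving_self.
- by move=> a b Ha Hb; rewrite /minn; case: ifP.
- by move=> W HW; exists W.
Qed.

Lemma metric_dim_min W : resolving e V W -> metric_dim e V <= #|W|.
Proof.
move=> HW; rewrite /metric_dim -big_filter.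
have : W \in filter (resolving e V) (index_enum _) by rewrite mem_filter HW mem_index_enum.
elim: (filter _ _) => [//|X s IH]; rewrite big_cons in_cons.
by case/orP => [/eqP <-|/IH]; [exact: geq_minl | exact: leq_trans (geq_minr _ _)].
Qed.

End Reach.

Lemma connect_reach (T : finType) (e : rel T) u v :
  connect e u v -> v \in reach e setT u #|T|.
Proof.
move=> /connectP[p pth ->]; case: (shortenP pth) => q qpth quniq _ {p pth}.
have size_q : size q < #|T|.
  by move/card_uniqP: quniq => /= <-; exact: max_card.
apply: (subsetP (@reach_mono _ e setT u _ _ (ltnW size_q))).
elim/last_ind: q qpth {quniq size_q} => [|q y IH]; first by rewrite reach0 set11.
rewrite rcons_path last_rcons size_rcons reachS => /andP[/IH qr ey].
by rewrite !inE; apply/orP; right; apply/existsP; exists (last u q); rewrite qr.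
Qed.

Lemma find_iota_prefix (P : pred nat) n N :
  P n -> n <= N -> find P (iota 0 N.+1) = find P (iota 0 n.+1).
Proof.
move=> Pn nN; rewrite -(subnKC nN) -addSn iotaD find_cat.
suff -> : has P (iota 0 n.+1) by [].
by apply/hasP; exists n; rewrite // mem_iota leq0n add0n ltnSn.
Qed.

Section Twins.
Variables (T : finType) (e : rel T).
Hypotheses (sym : symmetric e) (irr : irreflexive e).

Definition twin_equiv u v := (u == v) || twins e u v.

Lemma twinsP u v :
  reflect (u != v /\ forall z, z != u -> z != v -> e v z = e u z) (twins e u v).
Proof.
rewrite /twins; apply: (iffP andP) => [[uv /eqP E]|[uv H]]; split => //.
- by move=> z zu zv; move/setP: E => /(_ z); rewrite !inE zu zv.
- apply/eqP/setP => z; rewrite !inE.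
  case: (eqVneq z u) => [->|zu]; first by rewrite ?irr ?andbF.
  case: (eqVneq z v) => [->|zv]; first by rewrite ?irr ?andbF.
  by rewrite /= H.
Qed.

Lemma twin_equiv_refl u : twin_equiv u u.
Proof. by rewrite /twin_equiv eqxx. Qed.

Lemma twins_sym u v : twins e u v -> twins e v u.
Proof.
move/twinsP => [uv H]; apply/twinsP; split; first by rewrite eq_sym.
by move=> z zv zu; rewrite H.
Qed.

Lemma twin_equiv_sym u v : twin_equiv u v -> twin_equiv v u.
Proof.
by rewrite /twin_equiv => /orP[/eqP->|/twins_sym->]; rewrite ?eqxx ?orbT.
Qed.

Lemma twin_equiv_trans u v w : twin_equiv u v -> twin_equiv v w -> twin_equiv u w.
Proof.
rewrite /twin_equiv => /orP[/eqP->//|uv] /orP[/eqP<-|vw]; first by rewrite uv orbT.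
case: (eqVneq u w) => //= uw.
move/twinsP: uv => [uv Huv]; move/twinsP: vw => [vw Hvw].
apply/twinsP; split => // z zu zw.
case: (eqVneq z v) => [->|zv]; last by rewrite (Hvw z zv zw) (Huv z zu zv).
have wv : w != v by rewrite eq_sym.
have wu : w != u by rewrite eq_sym.
by rewrite sym (Huv w wu wv) -(sym w u) (Hvw u uv uw) sym.
Qed.

Lemma tclassE u v : (u \in tclass e v) = twin_equiv u v.
Proof. by rewrite inE. Qed.

Lemma tclass_self v : v \in tclass e v.
Proof. by rewrite tclassE twin_equiv_refl. Qed.

Lemma tclass_eqP x y : (tclass e x == tclass e y) = twin_equiv x y.
Proof.
apply/eqP/idP => [E|xy]; first by rewrite -tclassE -E tclass_self.
apply/setP => u; rewrite !tclassE; apply/idP/idP => ux.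
- exact: twin_equiv_trans ux xy.
- exact: twin_equiv_trans ux (twin_equiv_sym xy).
Qed.

Lemma tclass_twin_vertices y : tclass e y \in twin_vertices e.
Proof. exact: imset_f. Qed.

Lemma twin_adj u u' v : twin_equiv u u' -> ~~ twin_equiv u v -> e u v -> e u' v.
Proof.
rewrite /twin_equiv => /orP[/eqP<-//|tw] nuv.
move/twinsP: (tw) => [_ H].
have vu : v != u by apply: contra nuv => /eqP->; rewrite eqxx.
have vu' : v != u' by apply: contra nuv => /eqP->; rewrite tw orbT.
by rewrite H.
Qed.

Lemma twin_edge_tclass x y :
  twin_edge e (tclass e x) (tclass e y) = ~~ twin_equiv x y && e x y.
Proof.
rewrite /twin_edge tclass_eqP; case: (boolP (twin_equiv x y)) => //= nxy.
apply/existsP/idP => [[u /andP[ux /existsP[v /andP[vy euv]]]]|exy]; last first.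
  by exists x; rewrite tclass_self; apply/existsP; exists y; rewrite tclass_self.
rewrite !tclassE in ux vy.
have nuv : ~~ twin_equiv u v.
  apply: contra nxy => uv; apply: twin_equiv_trans (twin_equiv_sym ux) _.
  exact: twin_equiv_trans uv vy.
have exv : e x v by apply: twin_adj ux nuv euv.
rewrite sym; apply: (twin_adj vy); last by rewrite sym.
apply: contra nxy => vx; apply: twin_equiv_sym.
exact: twin_equiv_trans (twin_equiv_sym vy) vx.
Qed.

Lemma reach_twin x y y' k : twin_equiv y y' -> ~~ twin_equiv y x ->
  y' \in reach e setT x k -> y \in reach e setT x k.
Proof.
move=> yy' nyx; elim: k => [|k IH].
  by rewrite reach0 inE => /eqP Ey'; move: nyx; rewrite -Ey' yy'.
rewrite !reachS !inE => /orP[/IH ->//|/existsP[z /andP[zr ezy']]].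
case: (eqVneq z y) => [<-|zy]; first by rewrite zr.
apply/orP; right; apply/existsP; exists z; rewrite zr /=.
move: yy'; rewrite /twin_equiv => /orP[/eqP->//|/twinsP[_ H]].
have zy' : z != y' by apply: contraTneq ezy' => ->; rewrite irr.
by rewrite sym -H // sym.
Qed.

Lemma reach_twin_graph x k :
  reach (twin_edge e) (twin_vertices e) (tclass e x) k = tclass e @: reach e setT x k.
Proof.
elim: k => [|k IH]; first by rewrite !reach0 imset_set1.
rewrite !reachS IH imsetU; apply/eqP; rewrite eqEsubset !subUset !subsetUl /=.
apply/andP; split; apply/subsetP => C.
- rewrite inE => /andP[/imsetP[y _ ->] /existsP[X /andP[/imsetP[z zr ->]]]].
  rewrite twin_edge_tclass => /andP[_ ezy].
  by apply/setUP; right; apply: imset_f; rewrite !inE; apply/existsP; exists z; rewrite zr.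
- move=> /imsetP[y]; rewrite !inE => /existsP[z /andP[zr ezy]] ->.
  case: (boolP (twin_equiv z y)) => [zy|nzy].
    by apply/orP; left; move: zy; rewrite -tclass_eqP => /eqP <-; exact: imset_f.
  apply/orP; right; rewrite tclass_twin_vertices /=.
  by apply/existsP; exists (tclass e z); rewrite imset_f // twin_edge_tclass nzy.
Qed.

Lemma mem_reach_twin_graph x w k : ~~ twin_equiv w x ->
  (tclass e w \in reach (twin_edge e) (twin_vertices e) (tclass e x) k) =
  (w \in reach e setT x k).
Proof.
move=> nwx; rewrite reach_twin_graph; apply/imsetP/idP => [[w' w'r]|]; last by exists w.
by move/eqP; rewrite tclass_eqP => ww'; apply: reach_twin ww' nwx w'r.
Qed.

Lemma dist_twin_graph x w : connected_graph e -> ~~ twin_equiv w x ->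
  dist (twin_edge e) (twin_vertices e) (tclass e x) (tclass e w) = dist e setT x w.
Proof.
move=> conn nwx; rewrite /dist (eq_find (a2 := fun k => w \in reach e setT x k)).
  apply: find_iota_prefix; first exact: connect_reach.
  by have := leq_card _ (@set1_inj T).
by move=> k; rewrite /= mem_reach_twin_graph.
Qed.

(* The default [y] is never used: the pick succeeds since [y \in tclass e y]. *)
Definition trep y := odflt y [pick z in tclass e y].

Lemma trep_tclass y : tclass e (trep y) = tclass e y.
Proof.
apply/eqP; rewrite tclass_eqP -tclassE /trep.
by case: pickP => [//|/(_ y)]; rewrite tclass_self.
Qed.

Lemma trep_eq x y : tclass e x = tclass e y -> trep x = trep y.
Proof.
rewrite /trep => E; rewrite E; case: pickP => // /(_ y).
by rewrite tclass_self.
Qed.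

Section Lift.
Variable Ws : {set {set T}}.
Hypothesis WsV : Ws \subset twin_vertices e.

Definition class_reps := [set y | (trep y == y) && (tclass e y \notin Ws)].

Lemma card_class_reps : #|class_reps| = #|twin_vertices e| - #|Ws|.
Proof.
have image : tclass e @: class_reps = twin_vertices e :\: Ws.
  apply/setP => C; apply/imsetP/setDP => [[y]|[/imsetP[y _ ->] yW]].
    by rewrite inE => /andP[_ yW] ->; rewrite tclass_twin_vertices.
  by exists (trep y); rewrite ?inE trep_tclass // (trep_eq (trep_tclass y)) eqxx.
rewrite -(setIidPr WsV) -cardsD -image card_in_imset //.
move=> y z; rewrite !inE => /andP[/eqP <- _] /andP[/eqP <- _].
by rewrite !trep_tclass => /trep_eq.
Qed.

Lemma resolving_lift : connected_graph e ->
  resolving (twin_edge e) (twin_vertices e) Ws -> resolving e setT (~: class_reps).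
Proof.
move=> conn /andP[_ /forallP resWs]; rewrite /resolving subsetT /=.
apply/forallP => u; apply/implyP => _; apply/forallP => v; apply/implyP => _.
apply/implyP => /forallP Hd.
have dist_out w : w \notin class_reps -> dist e setT u w = dist e setT v w.
  by move=> wR; move: (Hd w); rewrite inE wR => /eqP.
case: (boolP (u \in class_reps)) => uR; last first.
  by move: (dist_out u uR); rewrite dist_self => /esym/dist_eq0->.
case: (boolP (v \in class_reps)) => vR; last first.
  by move: (dist_out v vR); rewrite dist_self => /dist_eq0->.
move: (uR) (vR); rewrite !inE => /andP[/eqP uu uW] /andP[/eqP vv vW].
case: (boolP (twin_equiv u v)) => [|nuv].
  by rewrite -tclass_eqP => /eqP/trep_eq; rewrite uu vv => ->.
have : ~~ [forall C in Ws, dist (twin_edge e) (twin_vertices e) (tclass e u) C ==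
                           dist (twin_edge e) (twin_vertices e) (tclass e v) C].
  move: (resWs (tclass e u)); rewrite tclass_twin_vertices => /forallP/(_ (tclass e v)).
  rewrite tclass_twin_vertices tclass_eqP (negbTE nuv) /= implybF.
  by apply: contra => ->.
case/forallPn => C; rewrite negb_imply => /andP[CW].
have [w _ Cw] := imsetP (subsetP WsV C CW); subst C.
have not_twin x : tclass e x \notin Ws -> ~~ twin_equiv w x.
  by apply: contra; rewrite -tclass_eqP => /eqP <-.
rewrite !dist_twin_graph ?not_twin // dist_out ?eqxx //.
by rewrite inE CW andbF.
Qed.

End Lift.

End Twins.

Theorem proposition2p8 (T : finType) (e : rel T) (t : nat) :
  simple_graph e -> connected_graph e -> 0 < t ->
  metric_dim (twin_edge e) (twin_vertices e) + t = #|twin_vertices e| ->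
  metric_dim e [set: T] + t <= #|T|.
Proof.
move=> [sym irr] conn _ dimGs.
have [Ws resWs cardWs] := metric_dim_attained (twin_edge e) (twin_vertices e).
have WsV : Ws \subset twin_vertices e by case/andP: resWs.
have cardR : #|class_reps e Ws| = t.
  by rewrite card_class_reps // -dimGs -cardWs addKn.
have := metric_dim_min (resolving_lift sym irr WsV conn resWs).
have := cardsC (class_reps e Ws).
lia.
Qed.
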